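(* Let $p,q,r$ be positive integers with $\frac1p+\frac1q+\frac1r\le1$, $M=\max\{p,q,r\}$, $m>0$, and let $a$ be a real number with $a>\max\{12M,\,m^2(m+3)\}$. Let $f(x,y,z)=x^p+y^q+z^r+axyz$ and $V_a(1,t)=f^{-1}(t)\cap D^6_1$, where $D^6_1$ is the closed unit ball in $\mathbb C^3$. Then for any real $\theta$, $V_a(1,\frac1a e^{i\theta})$ is a Milnor fiber of $f$, and every point $(x,y,z)\in V_a(1,\frac1ae^{i\theta})$ satisfies $\max\{|x|,|y|,|z|\}>\frac ma$.
   Context: The Milnor radius $\varepsilon_f$ of $f$ is the supremum of $\varepsilon$ such that every sphere $S^5_\rho$ ($0<\rho\le\varepsilon$) centered at the origin is transverse to $f^{-1}(0)$. A Milnor fiber of $f$ is a set $f^{-1}(\delta e^{i\theta})\cap D^6_\varepsilon$ where $\varepsilon<\varepsilon_f$ and $\delta>0$ is such that $f^{-1}(s)$ meets $S^5_\varepsilon$ transversally for all $0\le|s|\le\delta$. *)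

From Stdlib Require Import Reals.
From Coquelicot Require Import Coquelicot.
Open Scope R_scope.

Definition C3 : Type := (C * C * C)%type.

Definition C3_NM : NormedModule R_AbsRing :=
  prod_NormedModule R_AbsRing
    (prod_NormedModule R_AbsRing C_R_NormedModule C_R_NormedModule)
    C_R_NormedModule.

Definition cx (w : C3) : C := fst (fst w).
Definition cy (w : C3) : C := snd (fst w).
Definition cz (w : C3) : C := snd w.

Fixpoint cpow (z : C) (n : nat) : C :=
  match n with O => RtoC 1 | S k => Cmult z (cpow z k) end.

Definition cexpi (th : R) : C := (cos th, sin th).

Definition nrm2 (w : C3) : R :=
  (Cmod (cx w))^2 + (Cmod (cy w))^2 + (Cmod (cz w))^2.

Definition nrm (w : C3) : R := sqrt (nrm2 w).

Definition rinner (w v : C3) : R :=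
  Re (Cmult (cx w) (Cconj (cx v))) + Re (Cmult (cy w) (Cconj (cy v)))
  + Re (Cmult (cz w) (Cconj (cz v))).

Definition fpqr (p q r : nat) (a : R) (w : C3) : C :=
  Cplus (Cplus (Cplus (cpow (cx w) p) (cpow (cy w) q)) (cpow (cz w) r))
        (Cmult (RtoC a) (Cmult (cx w) (Cmult (cy w) (cz w)))).

(* Transversality of the level set F^{-1}(s) and the sphere S_rho at a point w
   of both: the restriction of F to the sphere S_rho is a submersion at w, i.e.
   F is (real-)differentiable at w with derivative L, and L maps the real
   tangent space T_w S_rho = { v | <w, v> = 0 } onto C.  (This is equivalent to
   F^{-1}(s) being a smooth manifold at w that meets S_rho transversally.) *)
Definition transverse_at (F : C3 -> C) (w : C3) : Prop :=
  exists L : C3 -> C,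
    @filterdiff R_AbsRing C3_NM C_R_NormedModule F (locally (T := C3_NM) w) L /\
    forall c : C, exists v : C3, rinner w v = 0 /\ L v = c.

Definition sphere_transverse (F : C3 -> C) (rho : R) (s : C) : Prop :=
  forall w : C3, nrm w = rho -> F w = s -> transverse_at F w.

(* "eps < eps_F", where the Milnor radius eps_F is the supremum of the eps such
   that every sphere S_rho, 0 < rho <= eps, is transverse to F^{-1}(0). *)
Definition lt_milnor_radius (F : C3 -> C) (eps : R) : Prop :=
  exists eps', eps < eps' /\
    forall rho, 0 < rho <= eps' -> sphere_transverse F rho (RtoC 0).

Definition is_milnor_fiber (F : C3 -> C) (V : C3 -> Prop) : Prop :=
  exists eps delta th : R,
    0 < eps /\ lt_milnor_radius F eps /\ 0 < delta /\
    (forall s : C, Cmod s <= delta -> sphere_transverse F eps s) /\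
    (forall w : C3, V w <-> (F w = Cmult (RtoC delta) (cexpi th) /\ nrm w <= eps)).

Definition Va (p q r : nat) (a : R) (t : C) (w : C3) : Prop :=
  fpqr p q r a w = t /\ nrm w <= 1.

(* A fiber f^{-1}(s) fails to meet the sphere through w transversally exactly when the
   gradient of f at w is a complex multiple mu w-bar of w-bar.  Multiplying the three
   coordinate equations by x, y, z turns such a critical point into
   p x^p + axyz = mu |x|^2, q y^q + axyz = mu |y|^2, r z^r + axyz = mu |z|^2.
   On f^{-1}(0), dividing by p, q, r and adding shows that each of |x|^p, |y|^q, |z|^r
   exceeds P = |xyz| when a > max(p,q,r); since P < 1 on the ball of radius 11/10,
   1/p + 1/q + 1/r <= 1 gives P <= P^(1/p) P^(1/q) P^(1/r) < P, so the Milnor radius exceeds 1.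
   On the unit sphere, subtracting the equations pairwise gives
   a P ||x|^2 - |y|^2| <= 2 M |x|^2 |y|^2, which for a > 12 M forces |x|, |y|, |z| >= 1/2,
   hence |f| >= a/8 - 1 > 1/a; critical points with a zero coordinate lie on an axis,
   where |f| = 1.  Finally, if |x|, |y|, |z| <= m/a then |f| <= 3 (m/a)^2 + a (m/a)^3 < 1/a. *)

From Stdlib Require Import Reals Lra Lia Psatz.
From Coquelicot Require Import Coquelicot.
Open Scope R_scope.

(** * Real differentiability of [fpqr] *)

Definition dcpow (z : C) (n : nat) : C :=
  match n with O => RtoC 0 | S k => (RtoC (INR n) * cpow z k)%C end.

Section ComplexValuedDifferentiation.

Variables (U : NormedModule R_AbsRing) (x : U).

Lemma filterdiff_Re (f : U -> C) lf :
  filterdiff f (locally x) lf ->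
  filterdiff (fun t => Re (f t) : R_NormedModule) (locally x) (fun t => Re (lf t)).
Proof.
  intros Hf.
  apply (filterdiff_comp' f (fun c : C_R_NormedModule => Re c : R_NormedModule)); auto.
  apply filterdiff_linear, (@is_linear_fst R_AbsRing R_NormedModule R_NormedModule).
Qed.

Lemma filterdiff_Im (f : U -> C) lf :
  filterdiff f (locally x) lf ->
  filterdiff (fun t => Im (f t) : R_NormedModule) (locally x) (fun t => Im (lf t)).
Proof.
  intros Hf.
  apply (filterdiff_comp' f (fun c : C_R_NormedModule => Im c : R_NormedModule)); auto.
  apply filterdiff_linear, (@is_linear_snd R_AbsRing R_NormedModule R_NormedModule).
Qed.

Lemma filterdiff_pair (f g : U -> R) lf lg :
  filterdiff (f : U -> R_NormedModule) (locally x) lf ->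
  filterdiff (g : U -> R_NormedModule) (locally x) lg ->
  filterdiff (fun t => (f t, g t) : C_R_NormedModule) (locally x) (fun t => (lf t, lg t)).
Proof.
  intros Hf Hg.
  apply (filterdiff_comp'_2 (W := C_R_NormedModule) f g pair); auto.
  apply filterdiff_linear, is_linear_prod; [apply is_linear_fst | apply is_linear_snd].
Qed.

Lemma filterdiff_Cmult (f g : U -> C) lf lg :
  filterdiff f (locally x) lf -> filterdiff g (locally x) lg ->
  filterdiff (fun t => (f t * g t)%C : C_R_NormedModule) (locally x)
    (fun t => (lf t * g x + f x * lg t)%C).
Proof.
  intros Hf Hg.
  assert (comm : forall u v : R_AbsRing, mult u v = mult v u) by (intros; apply Rmult_comm).
  pose proof (filterdiff_Re _ _ Hf) as Ref; pose proof (filterdiff_Im _ _ Hf) as Imf.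
  pose proof (filterdiff_Re _ _ Hg) as Reg; pose proof (filterdiff_Im _ _ Hg) as Img.
  eapply filterdiff_ext_lin.
  - apply filterdiff_pair.
    + exact (filterdiff_minus_fct _ _ _ _
               (filterdiff_mult_fct _ _ x _ _ comm Ref Reg)
               (filterdiff_mult_fct _ _ x _ _ comm Imf Img)).
    + exact (filterdiff_plus_fct _ _ _ _
               (filterdiff_mult_fct _ _ x _ _ comm Ref Img)
               (filterdiff_mult_fct _ _ x _ _ comm Imf Reg)).
  - intros t. unfold Cplus, Cmult, Re, Im, minus, plus, opp, mult; simpl. f_equal; ring.
Qed.

Lemma filterdiff_Cplus (f g : U -> C) lf lg :
  filterdiff f (locally x) lf -> filterdiff g (locally x) lg ->
  filterdiff (fun t => (f t + g t)%C : C_R_NormedModule) (locally x)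
    (fun t => (lf t + lg t)%C).
Proof. exact (filterdiff_plus_fct f g lf lg). Qed.

Lemma filterdiff_cpow (h : U -> C) lh (n : nat) :
  filterdiff h (locally x) lh ->
  filterdiff (fun t => cpow (h t) n : C_R_NormedModule) (locally x)
    (fun t => (dcpow (h x) n * lh t)%C).
Proof.
  intros Hh. induction n as [|k IH].
  - eapply filterdiff_ext_lin; [exact (filterdiff_const (V := C_R_NormedModule) (RtoC 1))|].
    intros t. symmetry. apply Cmult_0_l.
  - eapply filterdiff_ext_lin; [exact (filterdiff_Cmult _ _ _ _ Hh IH)|].
    (* stated in [C] rather than in the normed-module carrier, so that [ring] applies *)
    intros t. change (@eq C (lh t * cpow (h x) k + h x * (dcpow (h x) k * lh t))%C
                            (dcpow (h x) (S k) * lh t)%C).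
    destruct k as [|j]; cbn [cpow dcpow].
    + change (INR 1) with 1. ring.
    + rewrite (S_INR (S j)), RtoC_plus. ring.
Qed.

End ComplexValuedDifferentiation.

Lemma filterdiff_cx (w : C3) :
  filterdiff (fun t : C3_NM => cx t : C_R_NormedModule) (locally w) cx.
Proof.
  apply filterdiff_linear, (is_linear_comp (U := C3_NM) fst fst);
    [apply is_linear_fst | apply is_linear_fst].
Qed.

Lemma filterdiff_cy (w : C3) :
  filterdiff (fun t : C3_NM => cy t : C_R_NormedModule) (locally w) cy.
Proof.
  apply filterdiff_linear, (is_linear_comp (U := C3_NM) fst snd);
    [apply is_linear_fst | apply is_linear_snd].
Qed.

Lemma filterdiff_cz (w : C3) :
  filterdiff (fun t : C3_NM => cz t : C_R_NormedModule) (locally w) cz.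
Proof.
  apply filterdiff_linear.
  exact (is_linear_snd (U := prod_NormedModule _ C_R_NormedModule C_R_NormedModule)).
Qed.

Definition cdot (u v : C3) : C := (cx u * cx v + cy u * cy v + cz u * cz v)%C.

Definition fpqr_grad (p q r : nat) (a : R) (w : C3) : C3 :=
  ((dcpow (cx w) p + RtoC a * (cy w * cz w),
    dcpow (cy w) q + RtoC a * (cx w * cz w)),
    dcpow (cz w) r + RtoC a * (cx w * cy w))%C.

Lemma filterdiff_fpqr p q r a (w : C3) :
  @filterdiff R_AbsRing C3_NM C_R_NormedModule (fpqr p q r a) (locally (T := C3_NM) w)
    (cdot (fpqr_grad p q r a w)).
Proof.
  pose proof (filterdiff_cx w) as Hx; pose proof (filterdiff_cy w) as Hy;
    pose proof (filterdiff_cz w) as Hz.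
  eapply filterdiff_ext_lin.
  - apply filterdiff_Cplus; [apply filterdiff_Cplus; [apply filterdiff_Cplus|] |].
    + exact (filterdiff_cpow _ _ _ _ p Hx).
    + exact (filterdiff_cpow _ _ _ _ q Hy).
    + exact (filterdiff_cpow _ _ _ _ r Hz).
    + apply filterdiff_Cmult; [apply (filterdiff_const (V := C_R_NormedModule)) |].
      apply filterdiff_Cmult; [exact Hx | apply filterdiff_Cmult; [exact Hy | exact Hz]].
  - intros v. unfold cdot, fpqr_grad, cx, cy, cz; simpl. change zero with (RtoC 0). ring.
Qed.

(** * Transversality away from critical points on the sphere *)

Lemma nrm2_ge_0 (w : C3) : 0 <= nrm2 w.
Proof. unfold nrm2. pose proof (pow2_ge_0 (Cmod (cx w))). nra. Qed.

Lemma nrm2_eq_0 (w : C3) : nrm2 w = 0 -> cx w = 0 /\ cy w = 0 /\ cz w = 0.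
Proof.
  unfold nrm2. intros H.
  pose proof (Cmod_ge_0 (cx w)); pose proof (Cmod_ge_0 (cy w)); pose proof (Cmod_ge_0 (cz w)).
  repeat split; apply Cmod_eq_0; nra.
Qed.

Lemma nrm2_sqr (w : C3) : nrm2 w = nrm w ^ 2.
Proof. unfold nrm. rewrite pow2_sqrt; [reflexivity | apply nrm2_ge_0]. Qed.

Lemma RtoC_nrm2 (w : C3) :
  RtoC (nrm2 w) = (cx w * Cconj (cx w) + cy w * Cconj (cy w) + cz w * Cconj (cz w))%C.
Proof. unfold nrm2. rewrite !RtoC_plus, !Cmod2_conj. reflexivity. Qed.

Lemma Cconj_RtoC (x : R) : Cconj (RtoC x) = RtoC x.
Proof. unfold Cconj, RtoC; simpl. f_equal. ring. Qed.

Definition conj_parallel (G w : C3) : Prop :=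
  exists mu : C, cx G = (mu * Cconj (cx w))%C /\ cy G = (mu * Cconj (cy w))%C /\
                 cz G = (mu * Cconj (cz w))%C.

Lemma cdot_onto_tangent (G w : C3) :
  0 < nrm2 w -> ~ conj_parallel G w ->
  forall c : C, exists v : C3, rinner w v = 0 /\ cdot G v = c.
Proof.
  intros Hw Hnpar c.
  set (mu := (cdot G w / RtoC (nrm2 w))%C).
  set (e := ((cx G - mu * Cconj (cx w), cy G - mu * Cconj (cy w)),
             cz G - mu * Cconj (cz w))%C : C3).
  assert (He_perp : (cx w * cx e + cy w * cy e + cz w * cz e)%C = 0).
  { assert (RtoC (nrm2 w) <> 0) by (intros E; apply RtoC_inj in E; lra).
    transitivity (cdot G w - mu * RtoC (nrm2 w))%C.
    - rewrite RtoC_nrm2. unfold cdot, e, cx, cy, cz; simpl. ring.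
    - unfold mu. field. assumption. }
  assert (He : RtoC (nrm2 e) <> 0).
  { intros E. apply RtoC_inj, nrm2_eq_0 in E as (E1 & E2 & E3).
    apply Hnpar. exists mu.
    unfold e, cx, cy, cz in E1, E2, E3; simpl in E1, E2, E3.
    repeat split; apply Ceq_minus; assumption. }
  exists ((c * Cconj (cx e) / RtoC (nrm2 e), c * Cconj (cy e) / RtoC (nrm2 e)),
          c * Cconj (cz e) / RtoC (nrm2 e))%C.
  split.
  - change (Re (cx w * Cconj (c * Cconj (cx e) / RtoC (nrm2 e))
              + cy w * Cconj (c * Cconj (cy e) / RtoC (nrm2 e))
              + cz w * Cconj (c * Cconj (cz e) / RtoC (nrm2 e)))%C = 0).
    rewrite !Cdiv_conj, !Cmult_conj, !Cconj_conj, Cconj_RtoC by exact He.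
    replace (_ + _)%C with (Cconj c / RtoC (nrm2 e) * (cx w * cx e + cy w * cy e + cz w * cz e))%C
      by (field; exact He).
    rewrite He_perp, Cmult_0_r. reflexivity.
  - unfold cdot. cbn [cx cy cz fst snd].
    pose proof (RtoC_nrm2 e) as HE. set (E := nrm2 e) in *.
    transitivity (c / RtoC E * ((cx e * Cconj (cx e) + cy e * Cconj (cy e) + cz e * Cconj (cz e))
      + mu * Cconj (cx w * cx e + cy w * cy e + cz w * cz e)))%C.
    + rewrite !Cplus_conj, !Cmult_conj. unfold e, cx, cy, cz; simpl. field. exact He.
    + rewrite <- HE, He_perp, Cconj_RtoC. field. exact He.
Qed.

Lemma transverse_at_fpqr p q r a (w : C3) :
  0 < nrm2 w -> ~ conj_parallel (fpqr_grad p q r a w) w -> transverse_at (fpqr p q r a) w.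
Proof.
  intros Hw Hnpar. exists (cdot (fpqr_grad p q r a w)).
  split; [apply filterdiff_fpqr | exact (cdot_onto_tangent _ _ Hw Hnpar)].
Qed.

Definition axyz (a : R) (w : C3) : C := (RtoC a * (cx w * (cy w * cz w)))%C.

Lemma fpqr_axyz p q r a (w : C3) :
  fpqr p q r a w = (cpow (cx w) p + cpow (cy w) q + cpow (cz w) r + axyz a w)%C.
Proof. reflexivity. Qed.

Lemma Cmod_axyz a (w : C3) :
  0 <= a -> Cmod (axyz a w) = a * (Cmod (cx w) * Cmod (cy w) * Cmod (cz w)).
Proof. intros Ha. unfold axyz. rewrite !Cmod_mult, Cmod_R, Rabs_pos_eq by exact Ha. ring. Qed.

Lemma Cmod_cpow (z : C) (n : nat) : Cmod (cpow z n) = Cmod z ^ n.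
Proof. induction n as [|n IH]; simpl; [apply Cmod_1 | rewrite Cmod_mult, IH; reflexivity]. Qed.

Lemma Cmult_dcpow (z : C) (n : nat) :
  (1 <= n)%nat -> (z * dcpow z n = RtoC (INR n) * cpow z n)%C.
Proof. intros Hn. destruct n as [|n]; [lia|]. cbn [dcpow cpow]. ring. Qed.

Lemma critical_point_eqs p q r a (w : C3) :
  (1 <= p)%nat -> (1 <= q)%nat -> (1 <= r)%nat ->
  conj_parallel (fpqr_grad p q r a w) w ->
  exists mu : C,
    (RtoC (INR p) * cpow (cx w) p + axyz a w = mu * RtoC (Cmod (cx w) ^ 2))%C /\
    (RtoC (INR q) * cpow (cy w) q + axyz a w = mu * RtoC (Cmod (cy w) ^ 2))%C /\
    (RtoC (INR r) * cpow (cz w) r + axyz a w = mu * RtoC (Cmod (cz w) ^ 2))%C.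
Proof.
  intros Hp Hq Hr (mu & Gx & Gy & Gz). exists mu.
  unfold fpqr_grad, cx, cy, cz in Gx, Gy, Gz; simpl in Gx, Gy, Gz.
  rewrite !Cmod2_conj, <- !Cmult_dcpow by assumption. unfold axyz, cx, cy, cz.
  repeat split.
  - transitivity (fst (fst w) * (dcpow (fst (fst w)) p + a * (snd (fst w) * snd w)))%C;
      [ring | rewrite Gx; ring].
  - transitivity (snd (fst w) * (dcpow (snd (fst w)) q + a * (fst (fst w) * snd w)))%C;
      [ring | rewrite Gy; ring].
  - transitivity (snd w * (dcpow (snd w) r + a * (fst (fst w) * snd (fst w))))%C;
      [ring | rewrite Gz; ring].
Qed.

(** * The zero fiber near the origin *)

Lemma weighted_sum_pos (n1 n2 n3 s1 s2 s3 : R) :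
  0 < n1 -> 0 < n2 -> 0 < n3 -> 0 <= s1 -> 0 <= s2 -> 0 <= s3 -> 0 < s1 + s2 + s3 ->
  0 < s1 / n1 + s2 / n2 + s3 / n3.
Proof.
  intros Hn1 Hn2 Hn3 Hs1 Hs2 Hs3 Hs.
  assert (0 < / n1) by (apply Rinv_0_lt_compat; lra).
  assert (0 < / n2) by (apply Rinv_0_lt_compat; lra).
  assert (0 < / n3) by (apply Rinv_0_lt_compat; lra).
  unfold Rdiv.
  assert (0 <= s1 * / n1) by nra. assert (0 <= s2 * / n2) by nra. assert (0 <= s3 * / n3) by nra.
  destruct (Rlt_or_le 0 s1); [nra|]. destruct (Rlt_or_le 0 s2); nra.
Qed.

Lemma critical_zero_fiber_moduli (n1 n2 n3 s1 s2 s3 : R) (u1 u2 u3 A mu : C) :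
  0 < n1 -> 0 < n2 -> 0 < n3 -> / n1 + / n2 + / n3 <= 1 ->
  0 <= s1 -> 0 <= s2 -> 0 <= s3 -> 0 < s1 + s2 + s3 ->
  (RtoC n1 * u1 + A = mu * RtoC s1)%C -> (RtoC n2 * u2 + A = mu * RtoC s2)%C ->
  (RtoC n3 * u3 + A = mu * RtoC s3)%C -> (u1 + u2 + u3 + A = 0)%C ->
  exists k S : R, 0 <= k /\ 0 < S /\
    n1 * Cmod u1 * S = Cmod A * (k * s1 + S) /\
    n2 * Cmod u2 * S = Cmod A * (k * s2 + S) /\
    n3 * Cmod u3 * S = Cmod A * (k * s3 + S).
Proof.
  intros Hn1 Hn2 Hn3 Hinv Hs1 Hs2 Hs3 Hs E1 E2 E3 Hsum.
  set (k := 1 - (/ n1 + / n2 + / n3)). set (S := s1 / n1 + s2 / n2 + s3 / n3).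
  assert (HS : 0 < S) by (apply weighted_sum_pos; assumption).
  (* divide the i-th equation by n_i and add them: the u_i cancel against the fiber equation *)
  assert (Hmu : (mu * RtoC S = - (RtoC k * A))%C).
  { assert (Hn : forall n : R, 0 < n -> RtoC n <> 0) by (intros n Hn E; apply RtoC_inj in E; lra).
    transitivity (mu * RtoC S + RtoC k * A - RtoC k * A)%C; [ring|].
    replace (mu * RtoC S + RtoC k * A)%C with
      ((mu * RtoC s1 - (RtoC n1 * u1 + A)) / RtoC n1 + (mu * RtoC s2 - (RtoC n2 * u2 + A)) / RtoC n2
       + (mu * RtoC s3 - (RtoC n3 * u3 + A)) / RtoC n3 + (u1 + u2 + u3 + A))%C.
    - rewrite E1, E2, E3, Hsum. field. repeat split; apply Hn; assumption.
    - unfold k, S. rewrite RtoC_minus, !RtoC_plus, !RtoC_div, !RtoC_inv by lra.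
      field. repeat split; apply Hn; assumption. }
  assert (coord : forall (n s : R) (u : C), 0 <= n -> 0 <= s ->
            (RtoC n * u + A = mu * RtoC s)%C -> n * Cmod u * S = Cmod A * (k * s + S)).
  { intros n s u Hn Hs' E.
    assert (Hu : (RtoC n * u * RtoC S = - (A * RtoC (k * s + S)))%C).
    { replace (RtoC n * u)%C with (mu * RtoC s - A)%C by (rewrite <- E; ring).
      rewrite RtoC_plus, RtoC_mult.
      transitivity (RtoC s * (mu * RtoC S) - A * RtoC S)%C; [ring|].
      rewrite Hmu. ring. }
    apply (f_equal Cmod) in Hu. rewrite Cmod_opp, !Cmod_mult, !Cmod_R in Hu.
    assert (0 <= k) by (unfold k; lra).
    rewrite !Rabs_pos_eq in Hu by nra. exact Hu. }
  exists k, S. repeat split; [unfold k; lra | exact HS | apply coord; try lra; assumption ..].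
Qed.

Lemma prod_lt_1_of_nrm2_small (X Y Z : R) :
  0 <= X -> 0 <= Y -> 0 <= Z -> X ^ 2 + Y ^ 2 + Z ^ 2 <= 121 / 100 -> X * Y * Z < 1.
Proof.
  intros HX HY HZ Hs.
  assert (2 * (X * Y) <= 121 / 100)
    by (pose proof (pow2_ge_0 (X - Y)); pose proof (pow2_ge_0 Z); nra).
  assert (Z <= 11 / 10) by nra.
  assert (0 <= X * Y) by nra.
  nra.
Qed.

Lemma ln_div_lt_of_lt_pow (P X : R) (n : nat) :
  0 < P -> 0 < X -> (0 < n)%nat -> P < X ^ n -> ln P / INR n < ln X.
Proof.
  intros HP HX Hn Hlt.
  assert (0 < INR n) by (apply lt_0_INR; lia).
  apply ln_increasing in Hlt; [|exact HP]. rewrite ln_pow in Hlt by exact HX.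
  apply (Rmult_lt_reg_l (INR n)); [assumption|]. field_simplify; lra.
Qed.

(* As P < 1 and 1/p + 1/q + 1/r <= 1: P <= P^(1/p) P^(1/q) P^(1/r) < X Y Z = P. *)
Lemma prod_lt_pows_absurd (X Y Z : R) (p q r : nat) :
  0 < X -> 0 < Y -> 0 < Z -> X * Y * Z < 1 ->
  (0 < p)%nat -> (0 < q)%nat -> (0 < r)%nat -> / INR p + / INR q + / INR r <= 1 ->
  X * Y * Z < X ^ p -> X * Y * Z < Y ^ q -> X * Y * Z < Z ^ r -> False.
Proof.
  intros HX HY HZ HP1 Hp Hq Hr Hinv Hxp Hyq Hzr.
  assert (HP : 0 < X * Y * Z) by (apply Rmult_lt_0_compat; [apply Rmult_lt_0_compat|]; lra).
  assert (Hln : ln (X * Y * Z) = ln X + ln Y + ln Z)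
    by (rewrite !ln_mult; try apply Rmult_lt_0_compat; lra).
  assert (ln (X * Y * Z) < 0) by (rewrite <- ln_1; apply ln_increasing; lra).
  pose proof (ln_div_lt_of_lt_pow _ _ _ HP HX Hp Hxp).
  pose proof (ln_div_lt_of_lt_pow _ _ _ HP HY Hq Hyq).
  pose proof (ln_div_lt_of_lt_pow _ _ _ HP HZ Hr Hzr).
  unfold Rdiv in *. nra.
Qed.

Lemma critical_zero_fiber_moduli_absurd (X Y Z a k S : R) (p q r : nat) :
  0 <= X -> 0 <= Y -> 0 <= Z -> 0 < X ^ 2 + Y ^ 2 + Z ^ 2 <= 121 / 100 ->
  (0 < p)%nat -> (0 < q)%nat -> (0 < r)%nat -> / INR p + / INR q + / INR r <= 1 ->
  INR p < a -> INR q < a -> INR r < a -> 0 <= k -> 0 < S ->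
  INR p * X ^ p * S = a * (X * Y * Z) * (k * X ^ 2 + S) ->
  INR q * Y ^ q * S = a * (X * Y * Z) * (k * Y ^ 2 + S) ->
  INR r * Z ^ r * S = a * (X * Y * Z) * (k * Z ^ 2 + S) -> False.
Proof.
  intros HX HY HZ Hs Hp Hq Hr Hinv Hpa Hqa Hra Hk HS Ex Ey Ez.
  pose proof (lt_0_INR _ Hp) as Hp'; pose proof (lt_0_INR _ Hq) as Hq';
    pose proof (lt_0_INR _ Hr) as Hr'.
  pose proof (prod_lt_1_of_nrm2_small X Y Z HX HY HZ (proj2 Hs)) as HP1.
  set (P := X * Y * Z) in *.
  destruct (Req_dec P 0) as [P0 | P0].
  - assert (vanish : forall (n : nat) (T s : R), 0 < INR n ->
              INR n * T ^ n * S = a * P * (k * s + S) -> T = 0).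
    { intros n T s Hn E. rewrite P0, Rmult_0_r, Rmult_0_l in E.
      destruct (Req_dec T 0) as [|HT]; [assumption|].
      exfalso. apply (pow_nonzero T n HT).
      apply Rmult_integral in E as [E | E]; [|lra].
      apply Rmult_integral in E as [E | E]; [lra | exact E]. }
    rewrite (vanish p X _ Hp' Ex), (vanish q Y _ Hq' Ey), (vanish r Z _ Hr' Ez) in Hs.
    simpl in Hs. lra.
  - assert (HX' : 0 < X) by (destruct HX as [|<-]; [assumption | contradict P0; unfold P; ring]).
    assert (HY' : 0 < Y) by (destruct HY as [|<-]; [assumption | contradict P0; unfold P; ring]).
    assert (HZ' : 0 < Z) by (destruct HZ as [|<-]; [assumption | contradict P0; unfold P; ring]).
    assert (HP : 0 < P) by (unfold P; apply Rmult_lt_0_compat; [apply Rmult_lt_0_compat|]; lra).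
    assert (dominate : forall (n : nat) (T s : R), 0 < INR n < a -> 0 <= s ->
              INR n * T ^ n * S = a * P * (k * s + S) -> P < T ^ n).
    { intros n T s Hn Hs' E.
      assert (0 <= k * s) by (apply Rmult_le_pos; assumption).
      assert (0 < a * P) by (apply Rmult_lt_0_compat; lra).
      assert (HaP : a * P * S <= INR n * T ^ n * S)
        by (rewrite E; apply Rmult_le_compat_l; lra).
      apply Rmult_le_reg_r in HaP; [|exact HS].
      apply (Rmult_lt_reg_l (INR n)); [lra|]. nra. }
    exact (prod_lt_pows_absurd X Y Z p q r HX' HY' HZ' HP1 Hp Hq Hr Hinv
             (dominate p X _ (conj Hp' Hpa) (pow2_ge_0 X) Ex)
             (dominate q Y _ (conj Hq' Hqa) (pow2_ge_0 Y) Ey)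
             (dominate r Z _ (conj Hr' Hra) (pow2_ge_0 Z) Ez)).
Qed.

Lemma no_critical_point_zero_fiber p q r a (w : C3) :
  (0 < p)%nat -> (0 < q)%nat -> (0 < r)%nat -> / INR p + / INR q + / INR r <= 1 ->
  INR p < a -> INR q < a -> INR r < a -> 0 < nrm2 w <= 121 / 100 ->
  fpqr p q r a w = 0 -> ~ conj_parallel (fpqr_grad p q r a w) w.
Proof.
  intros Hp Hq Hr Hinv Hpa Hqa Hra Hw Hf Hcrit.
  destruct (critical_point_eqs p q r a w ltac:(lia) ltac:(lia) ltac:(lia) Hcrit)
    as (mu & Ex & Ey & Ez).
  pose proof (lt_0_INR _ Hp) as Hp'; pose proof (lt_0_INR _ Hq) as Hq';
    pose proof (lt_0_INR _ Hr) as Hr'.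
  unfold nrm2 in Hw. rewrite fpqr_axyz in Hf.
  destruct (critical_zero_fiber_moduli _ _ _ _ _ _ _ _ _ _ _ Hp' Hq' Hr' Hinv
              (pow2_ge_0 _) (pow2_ge_0 _) (pow2_ge_0 _) (proj1 Hw) Ex Ey Ez Hf)
    as (k & S & Hk & HS & Mx & My & Mz).
  rewrite Cmod_axyz, !Cmod_cpow in Mx, My, Mz by lra.
  exact (critical_zero_fiber_moduli_absurd _ _ _ _ _ _ p q r
           (Cmod_ge_0 _) (Cmod_ge_0 _) (Cmod_ge_0 _) Hw Hp Hq Hr Hinv Hpa Hqa Hra Hk HS Mx My Mz).
Qed.

Lemma sphere_transverse_zero_fiber p q r a rho :
  (0 < p)%nat -> (0 < q)%nat -> (0 < r)%nat -> / INR p + / INR q + / INR r <= 1 ->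
  INR p < a -> INR q < a -> INR r < a -> 0 < rho <= 11 / 10 ->
  sphere_transverse (fpqr p q r a) rho 0.
Proof.
  intros Hp Hq Hr Hinv Hpa Hqa Hra Hrho w Hw Hf.
  assert (Hn : nrm2 w = rho ^ 2) by (rewrite nrm2_sqr, Hw; reflexivity).
  apply transverse_at_fpqr; [nra|].
  apply no_critical_point_zero_fiber; try assumption. nra.
Qed.

(** * The unit sphere and the small fibers *)

Lemma pow_le_pow_le_1 (x : R) (m n : nat) : 0 <= x <= 1 -> (m <= n)%nat -> x ^ n <= x ^ m.
Proof.
  intros Hx Hmn. replace n with (m + (n - m))%nat by lia. rewrite pow_add.
  assert (x ^ (n - m) <= 1) by (rewrite <- (pow1 (n - m)); apply pow_incr; lra).
  pose proof (pow_le x m (proj1 Hx)). nra.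
Qed.

Lemma Cmod_minus_le (u v : C) : Cmod (u - v) <= Cmod u + Cmod v.
Proof. rewrite <- (Cmod_opp v). apply Cmod_triangle. Qed.

Lemma critical_pair_bound (A mu ui uj : C) (ni nj : nat) (Xi Xj M : R) :
  (RtoC (INR ni) * ui + A = mu * RtoC (Xi ^ 2))%C ->
  (RtoC (INR nj) * uj + A = mu * RtoC (Xj ^ 2))%C ->
  Cmod ui = Xi ^ ni -> Cmod uj = Xj ^ nj -> 0 <= Xi <= 1 -> 0 <= Xj <= 1 ->
  (2 <= ni)%nat -> (2 <= nj)%nat -> INR ni <= M -> INR nj <= M ->
  Cmod A * Rabs (Xi ^ 2 - Xj ^ 2) <= 2 * M * (Xi ^ 2 * Xj ^ 2).
Proof.
  intros Ei Ej Hi Hj HXi HXj Hni Hnj HMi HMj.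
  assert (Hid : (A * RtoC (Xi ^ 2 - Xj ^ 2)
     = RtoC (INR ni) * ui * RtoC (Xj ^ 2) - RtoC (INR nj) * uj * RtoC (Xi ^ 2))%C).
  { rewrite RtoC_minus.
    transitivity ((RtoC (INR nj) * uj + A) * RtoC (Xi ^ 2)
                  - (RtoC (INR ni) * ui + A) * RtoC (Xj ^ 2)
                  + RtoC (INR ni) * ui * RtoC (Xj ^ 2)
                  - RtoC (INR nj) * uj * RtoC (Xi ^ 2))%C; [ring|].
    rewrite Ei, Ej. ring. }
  apply (f_equal Cmod) in Hid. rewrite Cmod_mult, Cmod_R in Hid. rewrite Hid.
  eapply Rle_trans; [apply Cmod_minus_le|].
  rewrite !Cmod_mult, !Cmod_R, Hi, Hj, !Rabs_pos_eq by (apply pos_INR || apply pow2_ge_0).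
  pose proof (pow_le_pow_le_1 Xi 2 ni HXi Hni). pose proof (pow_le_pow_le_1 Xj 2 nj HXj Hnj).
  pose proof (pow_le Xi ni (proj1 HXi)). pose proof (pow_le Xj nj (proj1 HXj)).
  pose proof (pow2_ge_0 Xi); pose proof (pow2_ge_0 Xj).
  pose proof (pos_INR ni); pose proof (pos_INR nj).
  assert (INR ni * Xi ^ ni <= M * Xi ^ 2) by (apply Rmult_le_compat; lra).
  assert (INR nj * Xj ^ nj <= M * Xj ^ 2) by (apply Rmult_le_compat; lra).
  nra.
Qed.

Lemma min_coord_ge_half (X Y Z : R) :
  0 < X -> 0 < Y -> 0 < Z -> Z <= X -> Z <= Y -> X ^ 2 + Y ^ 2 + Z ^ 2 = 1 ->
  6 * (X * Y * Z) * Rabs (X ^ 2 - Z ^ 2) <= X ^ 2 * Z ^ 2 ->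
  6 * (X * Y * Z) * Rabs (Y ^ 2 - Z ^ 2) <= Y ^ 2 * Z ^ 2 -> 1 / 2 <= Z.
Proof.
  intros HX HY HZ HZX HZY Hs Hxz Hyz.
  assert (HP : 0 < X * Y * Z) by (apply Rmult_lt_0_compat; [apply Rmult_lt_0_compat|]; lra).
  assert (6 * Y * (X ^ 2 - Z ^ 2) <= X * Y).
  { apply (Rmult_le_reg_l (X * Z)); [nra|].
    assert (6 * (X * Y * Z) * (X ^ 2 - Z ^ 2) <= 6 * (X * Y * Z) * Rabs (X ^ 2 - Z ^ 2))
      by (apply Rmult_le_compat_l; [lra | apply Rle_abs]).
    assert (X ^ 2 * Z ^ 2 <= X ^ 2 * (Z * Y)) by (apply Rmult_le_compat_l; nra).
    nra. }
  assert (6 * X * (Y ^ 2 - Z ^ 2) <= X * Y).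
  { apply (Rmult_le_reg_l (Y * Z)); [nra|].
    assert (6 * (X * Y * Z) * (Y ^ 2 - Z ^ 2) <= 6 * (X * Y * Z) * Rabs (Y ^ 2 - Z ^ 2))
      by (apply Rmult_le_compat_l; [lra | apply Rle_abs]).
    assert (Y ^ 2 * Z ^ 2 <= Y ^ 2 * (Z * X)) by (apply Rmult_le_compat_l; nra).
    nra. }
  assert (6 * (X ^ 2 - Z ^ 2) <= X) by (apply (Rmult_le_reg_l Y); nra).
  assert (6 * (Y ^ 2 - Z ^ 2) <= Y) by (apply (Rmult_le_reg_l X); nra).
  assert (X + Y <= 3 / 2) by (pose proof (pow2_ge_0 (X - Y)); nra).
  nra.
Qed.

Lemma prod_ge_eighth_of_pair_bounds (X Y Z : R) :
  0 < X -> 0 < Y -> 0 < Z -> X ^ 2 + Y ^ 2 + Z ^ 2 = 1 ->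
  6 * (X * Y * Z) * Rabs (X ^ 2 - Y ^ 2) <= X ^ 2 * Y ^ 2 ->
  6 * (X * Y * Z) * Rabs (X ^ 2 - Z ^ 2) <= X ^ 2 * Z ^ 2 ->
  6 * (X * Y * Z) * Rabs (Y ^ 2 - Z ^ 2) <= Y ^ 2 * Z ^ 2 -> 1 / 8 <= X * Y * Z.
Proof.
  intros HX HY HZ Hs Hxy Hxz Hyz.
  pose proof Hxy as Hyx; rewrite Rabs_minus_sym in Hyx.
  pose proof Hxz as Hzx; rewrite Rabs_minus_sym in Hzx.
  pose proof Hyz as Hzy; rewrite Rabs_minus_sym in Hzy.
  assert (Hhalf : 1 / 2 <= X /\ 1 / 2 <= Y /\ 1 / 2 <= Z).
  { destruct (Rle_dec Z X), (Rle_dec Z Y), (Rle_dec Y X).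
    all: first
      [ assert (1 / 2 <= Z) by (apply (min_coord_ge_half X Y Z); lra)
      | assert (1 / 2 <= Y) by (apply (min_coord_ge_half X Z Y); lra)
      | assert (1 / 2 <= X) by (apply (min_coord_ge_half Y Z X); lra) ].
    all: lra. }
  destruct Hhalf as (HX2 & HY2 & HZ2).
  assert (1 / 4 <= X * Y) by nra. nra.
Qed.

Lemma cpow_0 (n : nat) : (0 < n)%nat -> cpow 0 n = 0.
Proof. intros Hn. destruct n as [|n]; [lia|]. apply Cmult_0_l. Qed.

Lemma Cmod_fpqr_bounds p q r a (w : C3) :
  0 <= a ->
  let P := a * (Cmod (cx w) * Cmod (cy w) * Cmod (cz w)) in
  let T := Cmod (cx w) ^ p + Cmod (cy w) ^ q + Cmod (cz w) ^ r in
  P - T <= Cmod (fpqr p q r a w) <= P + T.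
Proof.
  intros Ha P T. unfold P, T. rewrite <- Cmod_axyz, <- !Cmod_cpow by exact Ha. rewrite fpqr_axyz.
  set (u := cpow (cx w) p); set (v := cpow (cy w) q); set (t := cpow (cz w) r).
  assert (Cmod (u + v + t) <= Cmod u + Cmod v + Cmod t).
  { eapply Rle_trans; [apply Cmod_triangle|].
    pose proof (Cmod_triangle u v). lra. }
  pose proof (Cmod_triangle (u + v + t) (axyz a w)).
  pose proof (Cmod_minus_le (u + v + t + axyz a w) (u + v + t)) as Hback.
  replace (u + v + t + axyz a w - (u + v + t))%C with (axyz a w) in Hback by ring.
  lra.
Qed.

Lemma critical_coord_zero_split (n : nat) (a : R) (y z mu : C) :
  (2 <= n)%nat -> a <> 0 ->
  (dcpow 0 n + RtoC a * (y * z) = mu * Cconj 0)%C -> y = 0 \/ z = 0.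
Proof.
  intros Hn Ha E. destruct n as [|[|n]]; [lia | lia|].
  cbn [dcpow cpow] in E. rewrite Cconj_RtoC in E.
  replace (RtoC (INR (S (S n))) * (0 * cpow 0 n) + RtoC a * (y * z))%C
    with (RtoC a * (y * z))%C in E by ring.
  rewrite Cmult_0_r in E.
  destruct (Ceq_dec y 0) as [|Hy]; [now left|]. destruct (Ceq_dec z 0) as [|Hz]; [now right|].
  exfalso. revert E. apply Cmult_neq_0; [intros Ea; apply RtoC_inj in Ea; contradiction|].
  apply Cmult_neq_0; assumption.
Qed.

Lemma critical_point_two_coords_zero p q r a (w : C3) :
  (2 <= p)%nat -> (2 <= q)%nat -> (2 <= r)%nat -> a <> 0 ->
  conj_parallel (fpqr_grad p q r a w) w -> cx w = 0 \/ cy w = 0 \/ cz w = 0 ->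
  (cx w = 0 /\ cy w = 0) \/ (cx w = 0 /\ cz w = 0) \/ (cy w = 0 /\ cz w = 0).
Proof.
  intros Hp Hq Hr Ha (mu & Gx & Gy & Gz) Hzero.
  unfold fpqr_grad in Gx, Gy, Gz; cbn [cx cy cz fst snd] in Gx, Gy, Gz.
  destruct Hzero as [E | [E | E]]; rewrite E in *.
  - apply critical_coord_zero_split in Gx; tauto.
  - apply critical_coord_zero_split in Gy; tauto.
  - apply critical_coord_zero_split in Gz; tauto.
Qed.

Lemma Cmod_fpqr_two_coords_zero p q r a (w : C3) :
  (0 < p)%nat -> (0 < q)%nat -> (0 < r)%nat -> nrm2 w = 1 ->
  (cx w = 0 /\ cy w = 0) \/ (cx w = 0 /\ cz w = 0) \/ (cy w = 0 /\ cz w = 0) ->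
  Cmod (fpqr p q r a w) = 1.
Proof.
  intros Hp Hq Hr Hw Haxis. unfold nrm2 in Hw. rewrite fpqr_axyz. unfold axyz.
  assert (unit : forall (t : C) (n : nat), Cmod t ^ 2 = 1 -> Cmod (cpow t n) = 1).
  { intros t n Ht. rewrite Cmod_cpow.
    replace (Cmod t) with 1 by (pose proof (Cmod_ge_0 t); nra). apply pow1. }
  destruct Haxis as [[E1 E2] | [[E1 E2] | [E1 E2]]]; rewrite E1, E2, Cmod_0 in *;
    rewrite !cpow_0 by assumption.
  - replace (0 + 0 + cpow (cz w) r + a * (0 * (0 * cz w)))%C with (cpow (cz w) r) by ring.
    apply unit. lra.
  - replace (0 + cpow (cy w) q + 0 + a * (0 * (cy w * 0)))%C with (cpow (cy w) q) by ring.
    apply unit. lra.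
  - replace (cpow (cx w) p + 0 + 0 + a * (cx w * (0 * 0)))%C with (cpow (cx w) p) by ring.
    apply unit. lra.
Qed.

Lemma sum_pows_le_nrm2 p q r (w : C3) :
  (2 <= p)%nat -> (2 <= q)%nat -> (2 <= r)%nat -> nrm2 w <= 1 ->
  Cmod (cx w) ^ p + Cmod (cy w) ^ q + Cmod (cz w) ^ r <= nrm2 w.
Proof.
  intros Hp Hq Hr Hw. unfold nrm2 in *.
  pose proof (Cmod_ge_0 (cx w)); pose proof (Cmod_ge_0 (cy w)); pose proof (Cmod_ge_0 (cz w)).
  pose proof (pow_le_pow_le_1 (Cmod (cx w)) 2 p ltac:(nra) Hp).
  pose proof (pow_le_pow_le_1 (Cmod (cy w)) 2 q ltac:(nra) Hq).
  pose proof (pow_le_pow_le_1 (Cmod (cz w)) 2 r ltac:(nra) Hr).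
  lra.
Qed.

Lemma critical_point_unit_sphere_prod p q r a M (w : C3) :
  (2 <= p)%nat -> (2 <= q)%nat -> (2 <= r)%nat ->
  INR p <= M -> INR q <= M -> INR r <= M -> 12 * M < a ->
  nrm2 w = 1 -> cx w <> 0 -> cy w <> 0 -> cz w <> 0 ->
  conj_parallel (fpqr_grad p q r a w) w ->
  1 / 8 <= Cmod (cx w) * Cmod (cy w) * Cmod (cz w).
Proof.
  intros Hp Hq Hr HMp HMq HMr Ha Hw Hx Hy Hz Hcrit.
  destruct (critical_point_eqs p q r a w ltac:(lia) ltac:(lia) ltac:(lia) Hcrit)
    as (mu & Ex & Ey & Ez).
  apply Cmod_gt_0 in Hx, Hy, Hz. unfold nrm2 in Hw.
  assert (HM : 0 <= M) by (pose proof (pos_INR p); lra).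
  assert (shrink : forall T R' Q, 0 <= Q -> a * T * R' <= 2 * M * Q -> 6 * T * R' <= Q).
  { intros T R' Q HQ HTQ. apply (Rmult_le_reg_l a); [lra|].
    assert (2 * M * Q <= a / 6 * Q) by (apply Rmult_le_compat_r; lra). nra. }
  assert (HX1 : 0 <= Cmod (cx w) <= 1) by nra.
  assert (HY1 : 0 <= Cmod (cy w) <= 1) by nra.
  assert (HZ1 : 0 <= Cmod (cz w) <= 1) by nra.
  apply prod_ge_eighth_of_pair_bounds; try assumption; apply shrink;
    try (apply Rmult_le_pos; apply pow2_ge_0); rewrite <- Cmod_axyz by lra.
  - exact (critical_pair_bound _ _ _ _ p q _ _ M Ex Ey (Cmod_cpow _ _) (Cmod_cpow _ _)
             HX1 HY1 Hp Hq HMp HMq).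
  - exact (critical_pair_bound _ _ _ _ p r _ _ M Ex Ez (Cmod_cpow _ _) (Cmod_cpow _ _)
             HX1 HZ1 Hp Hr HMp HMr).
  - exact (critical_pair_bound _ _ _ _ q r _ _ M Ey Ez (Cmod_cpow _ _) (Cmod_cpow _ _)
             HY1 HZ1 Hq Hr HMq HMr).
Qed.

Lemma no_critical_point_unit_sphere p q r a M (w : C3) :
  (2 <= p)%nat -> (2 <= q)%nat -> (2 <= r)%nat ->
  INR p <= M -> INR q <= M -> INR r <= M -> 12 * M < a ->
  nrm2 w = 1 -> Cmod (fpqr p q r a w) <= / a -> ~ conj_parallel (fpqr_grad p q r a w) w.
Proof.
  intros Hp Hq Hr HMp HMq HMr Ha Hw Hf Hcrit.
  assert (Ha24 : 24 <= a) by (pose proof (le_INR 2 p Hp); simpl in *; lra).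
  assert (Hinv : / a < 1) by (rewrite <- Rinv_1; apply Rinv_lt_contravar; lra).
  destruct (Ceq_dec (cx w) 0) as [Hx | Hx];
    [| destruct (Ceq_dec (cy w) 0) as [Hy | Hy];
       [| destruct (Ceq_dec (cz w) 0) as [Hz | Hz]]].
  1-3: rewrite (Cmod_fpqr_two_coords_zero p q r a w ltac:(lia) ltac:(lia) ltac:(lia) Hw
                 (critical_point_two_coords_zero p q r a w Hp Hq Hr ltac:(lra) Hcrit
                    ltac:(tauto))) in Hf; lra.
  pose proof (critical_point_unit_sphere_prod p q r a M w Hp Hq Hr HMp HMq HMr Ha Hw
                Hx Hy Hz Hcrit).
  pose proof (Cmod_fpqr_bounds p q r a w ltac:(lra)) as [Hlow _].
  pose proof (sum_pows_le_nrm2 p q r w Hp Hq Hr ltac:(lra)).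
  nra.
Qed.

Lemma unit_sphere_transverse p q r a M (s : C) :
  (2 <= p)%nat -> (2 <= q)%nat -> (2 <= r)%nat ->
  INR p <= M -> INR q <= M -> INR r <= M -> 12 * M < a ->
  Cmod s <= / a -> sphere_transverse (fpqr p q r a) 1 s.
Proof.
  intros Hp Hq Hr HMp HMq HMr Ha Hs w Hw Hf.
  assert (Hn : nrm2 w = 1) by (rewrite nrm2_sqr, Hw; ring).
  apply transverse_at_fpqr; [lra|].
  apply (no_critical_point_unit_sphere p q r a M); try assumption. rewrite Hf. exact Hs.
Qed.

Lemma Cmod_fpqr_lt_of_small_coords p q r m a (w : C3) :
  (2 <= p)%nat -> (2 <= q)%nat -> (2 <= r)%nat -> 0 < m -> m ^ 2 * (m + 3) < a ->
  nrm2 w <= 1 -> Cmod (cx w) <= m / a -> Cmod (cy w) <= m / a -> Cmod (cz w) <= m / a ->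
  Cmod (fpqr p q r a w) < / a.
Proof.
  intros Hp Hq Hr Hm Ha Hw HX HY HZ.
  assert (Ha0 : 0 < a) by (eapply Rlt_trans; [|exact Ha]; apply Rmult_lt_0_compat; nra).
  pose proof (Cmod_fpqr_bounds p q r a w ltac:(lra)) as [_ Hup].
  pose proof (sum_pows_le_nrm2 p q r w Hp Hq Hr Hw) as Hsum. unfold nrm2 in Hsum.
  pose proof (Cmod_ge_0 (cx w)); pose proof (Cmod_ge_0 (cy w)); pose proof (Cmod_ge_0 (cz w)).
  set (k := m / a) in *.
  set (X := Cmod (cx w)) in *; set (Y := Cmod (cy w)) in *; set (Z := Cmod (cz w)) in *.
  assert (X * Y * Z <= k * k * k)
    by (apply Rmult_le_compat; [nra | lra | apply Rmult_le_compat; lra | lra]).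
  assert (3 * k ^ 2 + a * (k * k * k) = m ^ 2 * (m + 3) / a * / a) by (unfold k; field; lra).
  assert (m ^ 2 * (m + 3) / a * / a < 1 * / a).
  { apply Rmult_lt_compat_r; [apply Rinv_0_lt_compat; lra|].
    apply (Rmult_lt_reg_l a); [lra|]. field_simplify; lra. }
  nra.
Qed.

Lemma fiber_point_coord_large p q r m a (w : C3) :
  (2 <= p)%nat -> (2 <= q)%nat -> (2 <= r)%nat -> 0 < m -> m ^ 2 * (m + 3) < a ->
  nrm2 w <= 1 -> Cmod (fpqr p q r a w) = / a ->
  Rmax (Cmod (cx w)) (Rmax (Cmod (cy w)) (Cmod (cz w))) > m / a.
Proof.
  intros Hp Hq Hr Hm Ha Hw Hf. apply Rnot_le_gt. intros Hmax.
  pose proof (Rle_trans _ _ _ (Rmax_r _ _) Hmax) as HYZ.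
  pose proof (Cmod_fpqr_lt_of_small_coords p q r m a w Hp Hq Hr Hm Ha Hw
                (Rle_trans _ _ _ (Rmax_l _ _) Hmax)
                (Rle_trans _ _ _ (Rmax_l _ _) HYZ) (Rle_trans _ _ _ (Rmax_r _ _) HYZ)).
  lra.
Qed.

Lemma two_le_of_inv_sum_le_1 (p q r : nat) :
  (0 < p)%nat -> (0 < q)%nat -> (0 < r)%nat -> / INR p + / INR q + / INR r <= 1 -> (2 <= p)%nat.
Proof.
  intros Hp Hq Hr Hinv. destruct p as [|[|p]]; [lia | exfalso | lia].
  pose proof (Rinv_0_lt_compat _ (lt_0_INR _ Hq)); pose proof (Rinv_0_lt_compat _ (lt_0_INR _ Hr)).
  simpl in Hinv. rewrite Rinv_1 in Hinv. lra.
Qed.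

Lemma Cmod_cexpi (th : R) : Cmod (cexpi th) = 1.
Proof.
  unfold Cmod, cexpi; cbn [fst snd]. rewrite <- sqrt_1. f_equal.
  pose proof (sin2_cos2 th). unfold Rsqr in *. lra.
Qed.

Theorem lemma1p9 (p q r : nat) (m a : R) :
  (0 < p)%nat -> (0 < q)%nat -> (0 < r)%nat ->
  / INR p + / INR q + / INR r <= 1 ->
  0 < m ->
  a > Rmax (12 * INR (Nat.max p (Nat.max q r))) (m ^ 2 * (m + 3)) ->
  forall th : R,
    is_milnor_fiber (fpqr p q r a) (Va p q r a (Cmult (RtoC (/ a)) (cexpi th))) /\
    (forall w : C3, Va p q r a (Cmult (RtoC (/ a)) (cexpi th)) w ->
       Rmax (Cmod (cx w)) (Rmax (Cmod (cy w)) (Cmod (cz w))) > m / a).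
Proof.
  intros Hp Hq Hr Hinv Hm Ha th.
  pose proof (two_le_of_inv_sum_le_1 p q r Hp Hq Hr Hinv) as Hp2.
  pose proof (two_le_of_inv_sum_le_1 q r p Hq Hr Hp ltac:(lra)) as Hq2.
  pose proof (two_le_of_inv_sum_le_1 r p q Hr Hp Hq ltac:(lra)) as Hr2.
  set (M := INR (Nat.max p (Nat.max q r))) in Ha.
  assert (HMp : INR p <= M) by (apply le_INR; lia).
  assert (HMq : INR q <= M) by (apply le_INR; lia).
  assert (HMr : INR r <= M) by (apply le_INR; lia).
  assert (HM : 12 * M < a) by (eapply Rle_lt_trans; [apply Rmax_l | exact Ha]).
  assert (Hm3 : m ^ 2 * (m + 3) < a) by (eapply Rle_lt_trans; [apply Rmax_r | exact Ha]).
  assert (Ha0 : 0 < a) by (pose proof (pos_INR p); lra).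
  split.
  - exists 1, (/ a), th. split; [lra|]. split; [|split; [|split]].
    + exists (11 / 10). split; [lra|]. intros rho Hrho.
      apply sphere_transverse_zero_fiber; try assumption; lra.
    + apply Rinv_0_lt_compat, Ha0.
    + intros s Hs. exact (unit_sphere_transverse p q r a M s Hp2 Hq2 Hr2 HMp HMq HMr HM Hs).
    + intros w. apply iff_refl.
  - intros w [Hf Hw]. apply (fiber_point_coord_large p q r m a w); try assumption.
    + rewrite nrm2_sqr. pose proof (sqrt_pos (nrm2 w)). unfold nrm in *. nra.
    + rewrite Hf, Cmod_mult, Cmod_cexpi, Cmod_R, Rabs_pos_eq by (left; apply Rinv_0_lt_compat, Ha0).
      apply Rmult_1_r.
Qed.
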